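(* For every PICOD hypergraph $\mathcal{H}$ with $\Delta(\mathcal{H})\ge 1$ and every prime power $q$, $\beta_q(\mathcal{H})\le\Delta(\mathcal{H})$.
   Context: PICOD problem: a server holds $m$ messages $b_1,\dots,b_m\in\mathbb{F}_q$; there are $n$ clients, client $i$ having side-information $\{b_j: j\in S_i\}$, $S_i\subseteq[m]$, and request-set $R_i=[m]\setminus S_i$ (assumed non-empty); client $i$ wants any one message $b_j$ with $j\in R_i$. A PICOD scheme of length $\ell$ over $\mathbb{F}_q$ is an encoding map $\phi:\mathbb{F}_q^m\to\mathbb{F}_q^\ell$ such that for every client $i$ there is an index $j_i\in R_i$ and a function $\psi_i$ with $\psi_i(\phi(b),(b_k)_{k\in S_i})=b_{j_i}$ for all $b\in\mathbb{F}_q^m$. The PICOD hypergraph $\mathcal{H}$ has vertex set $[m]$ and edge set $\{R_i:i\in[n]\}$. $\beta_q(\mathcal{H})$ is the minimum length of a PICOD scheme for $\mathcal{H}$ over $\mathbb{F}_q$. The degree of a vertex is the number of edges containing it, and $\Delta(\mathcal{H})$ is the maximum degree over all vertices. *)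

From HB Require Import structures.
From mathcomp Require Import all_boot all_order all_algebra.
From Stdlib Require Import ClassicalEpsilon.
Set Implicit Arguments. Unset Strict Implicit. Unset Printing Implicit Defensive.

(* A PICOD instance with m messages and n clients: client i has request set
   R_i (non-empty) and side information S_i = [m] \ R_i. *)
Record picod (m n : nat) := Picod {
  req : 'I_n -> {set 'I_m};
  req_nonempty : forall i, req i != set0 }.

Section PICOD.
Variables (m n : nat) (H : picod m n) (F : finFieldType).

(* the side information (b_k)_{k in S_i} of client i, encoded as the vector
   b with the coordinates in R_i masked out *)
Definition side (i : 'I_n) (b : 'I_m -> F) : 'I_m -> F :=
  fun k => if k \in req H i then 0%R else b k.

Definition is_scheme (l : nat) (phi : ('I_m -> F) -> ('I_l -> F)) : Prop :=
  forall i : 'I_n, exists2 j : 'I_m, j \in req H i &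
    exists psi : ('I_l -> F) -> ('I_m -> F) -> F,
      forall b : 'I_m -> F, psi (phi b) (side i b) = b j.

Definition has_scheme (l : nat) : Prop := exists phi, @is_scheme l phi.

Definition has_schemeb (l : nat) : bool :=
  if excluded_middle_informative (has_scheme l) then true else false.

Lemma has_scheme_m : has_scheme m.
Proof.
exists (fun b => b) => i.
have /set0Pn [j Hj] := req_nonempty H i.
by exists j => //; exists (fun y _ => y j).
Qed.

Lemma has_schemeb_ex : exists l, has_schemeb l.
Proof.
exists m; rewrite /has_schemeb.
by case: excluded_middle_informative => // Hn; case: (Hn has_scheme_m).
Qed.

(* beta_q(H): minimum length of a PICOD scheme over F (|F| = q) *)
Definition beta : nat := ex_minn has_schemeb_ex.

End PICOD.

Definition edges m n (H : picod m n) : {set {set 'I_m}} :=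
  [set req H i | i : 'I_n].

Definition degree m n (H : picod m n) (v : 'I_m) : nat :=
  #|[set e in edges H | v \in e]|.

Definition max_degree m n (H : picod m n) : nat :=
  \max_(v : 'I_m) degree H v.

From mathcomp Require Import all_boot all_order all_algebra.
From Stdlib Require Import FunctionalExtensionality ClassicalEpsilon.
Set Implicit Arguments. Unset Strict Implicit. Unset Printing Implicit Defensive.
Import GRing.Theory.

(* Induction on the maximum degree k of a family E of non-empty request sets.
   Take a minimal subfamily B of E covering the same vertices; by minimality
   every e in B has a private vertex p_e (lying in no other member of B), so
   T = {p_e | e in B} meets each e in B in exactly p_e.  Sending the single
   symbol sum_(t in T) b_t lets every client of B decode b_(p_e) from its side
   information, and every vertex of a set of E lies in some set of B, so the
   remaining family E \ B has maximum degree at most k - 1. *)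

Section Coding.
Variables (m : nat) (F : finFieldType).
Implicit Types (e T : {set 'I_m}) (E B : {set {set 'I_m}}) (b : 'I_m -> F).

Definition side_info e b : 'I_m -> F := fun k => if k \in e then 0%R else b k.

Definition decodes l (phi : ('I_m -> F) -> ('I_l -> F)) e : Prop :=
  exists2 j, j \in e & exists psi : ('I_l -> F) -> ('I_m -> F) -> F,
    forall b, psi (phi b) (side_info e b) = b j.

Definition cons_code l (s : ('I_m -> F) -> F) (phi : ('I_m -> F) -> ('I_l -> F))
    b (x : 'I_l.+1) : F :=
  if unlift ord0 x is Some y then phi b y else s b.

Lemma decodes_cons_code_tail l s (phi : ('I_m -> F) -> ('I_l -> F)) e :
  decodes phi e -> decodes (cons_code s phi) e.
Proof.
case=> j je [psi psiP]; exists j => //.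
exists (fun c => psi (fun y => c (lift ord0 y))) => b; rewrite -psiP.
by congr psi; apply: functional_extensionality => y; rewrite /cons_code liftK.
Qed.

Lemma sum_side_info e T p b : e :&: T = [set p] ->
  (\sum_(t in T) b t = b p + \sum_(t in T) side_info e b t)%R.
Proof.
move=> eT; have /setIP [pe pT] : p \in e :&: T by rewrite eT set11.
rewrite (bigD1 p pT) [in RHS](bigD1 p pT) /= /side_info pe add0r.
congr (_ + _)%R; apply: eq_bigr => t /andP [tT tp].
rewrite ifF //; apply: contraNF tp => te.
by rewrite -in_set1 -eT inE te.
Qed.

Lemma decodes_cons_code_sum l (phi : ('I_m -> F) -> ('I_l -> F)) T e p :
  e :&: T = [set p] -> decodes (cons_code (fun b => \sum_(t in T) b t)%R phi) e.
Proof.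
move=> eT; have /setIP [pe _] : p \in e :&: T by rewrite eT set11.
exists p => //; exists (fun c s => c ord0 - \sum_(t in T) s t)%R => b.
by rewrite /cons_code unlift_none (sum_side_info _ eT) addrK.
Qed.

Definition private_in B e (p : 'I_m) : bool :=
  (p \in e) && [forall e' in B, (p \in e') ==> (e' == e)].

Lemma minset_cover_private (X : {set 'I_m}) B e :
  minset (fun B' => X \subset cover B') B -> e \in B -> exists p, private_in B e p.
Proof.
case/minsetP=> XB minB eB.
have /subsetPn [p pe pNB] : ~~ (e \subset cover (B :\ e)).
  apply/negP => eB'.
  have B'B : B :\ e = B.
    apply: minB; last exact: subsetDl.
    apply: (subset_trans XB); apply/bigcupsP => e' e'B.
    have [-> // | ne] := eqVneq e' e.
    by apply: bigcup_sup; rewrite !inE ne.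
  by move: eB; rewrite -B'B !inE eqxx.
exists p; rewrite /private_in pe; apply/forall_inP => e' e'B; apply/implyP => pe'.
by apply: contraNT pNB => ne; apply/bigcupP; exists e'; rewrite // !inE ne.
Qed.

Definition transversal B : {set 'I_m} :=
  [set p | [exists e in B, [pick q | private_in B e q] == Some p]].

Lemma transversal_meet1 B e :
  (forall e', e' \in B -> exists p, private_in B e' p) -> e \in B ->
  exists p, e :&: transversal B = [set p].
Proof.
move=> privB eB.
have [p pp pick_e] : exists2 p, private_in B e p & [pick q | private_in B e q] = Some p.
  case: pickP => [p pp | none]; first by exists p.
  by have [p] := privB e eB; rewrite none.
exists p; apply/setP => t; rewrite !inE.
apply/andP/eqP => [[te /exists_inP [e' e'B /eqP pick_e']] | ->]; last first.
  split; first by case/andP: pp.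
  by apply/exists_inP; exists e; rewrite // pick_e.
have := pick_e'; case: pickP => // q /andP [_ /forall_inP pvq] [qt].
by move/(_ e eB): pvq; rewrite qt te => /eqP ee'; move: pick_e; rewrite ee' pick_e' => -[].
Qed.

Definition deg_in E (v : 'I_m) : nat := #|[set e in E | v \in e]|.

Lemma deg_in_setD_cover E B v : B \subset E -> cover E \subset cover B ->
  deg_in (E :\: B) v <= (deg_in E v).-1.
Proof.
move=> BE EB; rewrite /deg_in.
have sub : [set e in E :\: B | v \in e] \subset [set e in E | v \in e].
  by apply/subsetP => e; rewrite !inE => /andP [/andP [_ ->] ->].
have [vE | vNE] := boolP (v \in cover E); last first.
  suff E0 : [set e in E | v \in e] = set0 by rewrite E0 cards0 leqn0 cards_eq0 -subset0 -E0.
  apply/setP => e; rewrite !inE; apply/andP => -[eE ve].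
  by case/negP: vNE; apply/bigcupP; exists e.
have /bigcupP [e eB ve] := subsetP EB v vE.
have lt : #|[set e in E :\: B | v \in e]| < #|[set e in E | v \in e]|.
  apply/proper_card/properP; split => //; exists e; rewrite !inE ?eB ?ve //.
  by rewrite (subsetP BE).
by rewrite -ltnS (ltn_predK lt).
Qed.

Lemma decodes_of_deg_in_le k E : set0 \notin E -> (forall v, deg_in E v <= k) ->
  exists phi : ('I_m -> F) -> ('I_k -> F), forall e, e \in E -> decodes phi e.
Proof.
elim: k E => [|k IH] E E0 degE.
  exists (fun _ _ => 0%R) => e eE; exfalso.
  have /set0Pn [v ve] : e != set0 by apply: contraNneq E0 => <-.
  by have := degE v; rewrite leqn0 cards_eq0 => /eqP/setP/(_ e); rewrite !inE eE ve.
have [B minB BE] := @minset_exists _ (fun B => cover E \subset cover B) E (subxx _).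
have [phi decE'] : exists phi : ('I_m -> F) -> ('I_k -> F),
    forall e, e \in E :\: B -> decodes phi e.
  apply: IH => [|v]; first by apply: contraNN E0; rewrite inE => /andP [].
  apply: leq_trans (deg_in_setD_cover v BE (minsetp minB)) _.
  by rewrite -subn1 leq_subLR add1n.
exists (cons_code (fun b => \sum_(t in transversal B) b t)%R phi) => e eE.
have [eB | eNB] := boolP (e \in B); last first.
  by apply/decodes_cons_code_tail/decE'; rewrite inE eNB.
have [p eT] := transversal_meet1 (fun e' => minset_cover_private minB (e := e')) eB.
exact: decodes_cons_code_sum eT.
Qed.

End Coding.

Lemma beta_le_scheme m n (H : picod m n) (F : finFieldType) l :
  has_scheme H F l -> beta H F <= l.
Proof.
move=> Hl; rewrite /beta; case: ex_minnP => l' _; apply.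
by rewrite /has_schemeb; case: excluded_middle_informative.
Qed.

Theorem theorem1 (m n : nat) (H : picod m n) (F : finFieldType) :
  1 <= max_degree H -> beta H F <= max_degree H.
Proof.
move=> _; apply: beta_le_scheme.
have [|v|phi decE] := @decodes_of_deg_in_le m F (max_degree H) (edges H).
- by apply/imsetP => -[i _ /esym/eqP]; apply/negP/req_nonempty.
- exact: (@leq_bigmax _ (fun v => degree H v)).
- by exists phi => i; apply/decE/imsetP; exists i.
Qed.
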